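(* Let $k\ge 2$, let $\lambda_1,\ldots,\lambda_k$ be nonzero integers with $\gcd(\lambda_1,\ldots,\lambda_k)=1$, and $g_i=\gcd(\lambda_j:j\ne i)$. Let $A\subset\mathbb{Z}$ be a finite reduced set. For each $1\le i\le k$ write $A$ as the disjoint union $A=\bigcup_{j=1}^{m_i}A_{ij}$ of its nonempty intersections with residue classes mod $g_i$, where $A_{ij}=a_{ij}+g_i\cdot A'_{ij}$ with $0\le a_{ij}<g_i$ and $A'_{ij}\subset\mathbb{Z}$. Fix $1\le i\le k$ and $1\le j\le m_i$. Then either $A'_{ij}$ is fully distributed mod $g_i$, or $$\big|\lambda_1\cdot A+\cdots+\lambda_{i-1}\cdot A+\lambda_i\cdot A_{ij}+\lambda_{i+1}\cdot A+\cdots+\lambda_k\cdot A\big|\ \ge\ |\lambda_1\cdot A_{ij}+\cdots+\lambda_k\cdot A_{ij}|+\min_{1\le w\le m_i}|A_{iw}|.$$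
   Context: For an integer $d$ and a finite set $A$, $d\cdot A=\{da:a\in A\}$, $x+A=\{x+a:a\in A\}$; sums of sets are Minkowski sums. A set $A\subset\mathbb{Z}$ is fully distributed (FD) mod $q$ if it intersects every residue class mod $q$. A finite set $A\subset\mathbb{Z}$ is reduced if it is not contained in any proper infinite arithmetic progression, i.e. there is no $a\in\mathbb{Z}$ and integer $d\ge 2$ with $A\subset a+d\mathbb{Z}$ (equivalently, $|A|\ge2$ and the differences of elements of $A$ have gcd 1). *)

(* Finite sets of integers are represented by sequences
   (duplicates allowed); membership is seq membership and the cardinality
   of the set is the number of distinct elements. *)
From mathcomp Require Import all_boot all_order all_algebra.
Set Implicit Arguments. Unset Strict Implicit. Unset Printing Implicit Defensive.
Import Order.TTheory GRing.Theory Num.Theory.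
Local Open Scope ring_scope.

Definition card_set (s : seq int) : nat := size (undup s).

Definition dil (d : int) (A : seq int) : seq int := [seq d * a | a <- A].

Definition sumset (A B : seq int) : seq int := [seq a + b | a <- A, b <- B].

Definition lin_sumset (k : nat) (lam : 'I_k -> int) (B : 'I_k -> seq int)
  : seq int := \big[sumset/[:: 0]]_(t < k) dil (lam t) (B t).

Definition gcd_all (k : nat) (lam : 'I_k -> int) : int :=
  \big[gcdz/0]_(t < k) lam t.

Definition gcd_but (k : nat) (lam : 'I_k -> int) (i : 'I_k) : int :=
  \big[gcdz/0]_(t < k | t != i) lam t.

Definition fully_distributed (A : seq int) (q : int) : Prop :=
  forall r : int, exists2 a, a \in A & (a == r %[mod q])%Z.

Definition reduced (A : seq int) : Prop :=
  ~ (exists (a d : int), 2 <= d /\ forall x, x \in A -> (d %| x - a)%Z).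

Definition res_class (A : seq int) (g r : int) : seq int :=
  [seq a <- A | (a %% g)%Z == r].

Definition res_class' (A : seq int) (g r : int) : seq int :=
  [seq ((a - r) %/ g)%Z | a <- res_class A g r].

(* min over the nonempty residue classes A_w mod g of |A_w|
   (the default value card_set A is an upper bound of all terms, and the
   minimum ranges over a nonempty list when A is nonempty) *)
Definition min_class_size (A : seq int) (g : int) : nat :=
  \big[minn/card_set A]_(r <- undup [seq (a %% g)%Z | a <- A])
     card_set (res_class A g r).

From mathcomp Require Import all_boot all_order all_algebra.
From mathcomp Require Import ring zify.
From Stdlib Require Import Classical.
Import Order.TTheory GRing.Theory Num.Theory.
Local Open Scope ring_scope.

(* Write g = g_i, B = A_{ij} = r + g.B' and mu_t = lam_t / g
   for t <> i, and let Q be the set of residues mod g of lam_i.B'.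
   Modulo g^2, an element sum_t lam_t f_t of a sumset whose coordinates f_t
   are all = r (mod g) except possibly f_{t1} is determined by the residue
   of lam_i (f_i - r)/g + mu_{t1} (f_{t1} - r) mod g (lemma [lin_comb_mod]).
   Two cases follow.
   - Some shift mu_{t1} (a - r) with a in A, t1 <> i, moves a point
     lam_i (b - r)/g (b in B) of Q outside Q.  Then replacing, in the
     element sum_t lam_t b of T = lam.B, the coordinate t1 by the elements
     of the class of a mod g yields |A_w| elements of
     S = lam_1.A + ... + lam_i.B + ... + lam_k.A outside T, whence
     |S| >= |T| + min_w |A_w| ([witness_growth]).
   - Otherwise every such shift stabilizes Q.  The stabilizer of the
     g-periodic set Q is an ideal of Z; since A is reduced and the mu_t are
     coprime it contains 1, so Q is everything; lam_i being prime to g,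
     B' meets every class mod g ([stable_fully_distributed]). *)

Lemma mem_lin_sumset {k : nat} (lam : 'I_k -> int) (B : 'I_k -> seq int) x :
  x \in lin_sumset lam B <->
  exists f : 'I_k -> int, (forall t, f t \in B t) /\ x = \sum_(t < k) lam t * f t.
Proof.
elim: k lam B x => [|k IH] lam B x.
  rewrite /lin_sumset big_ord0 inE; split.
    by move/eqP=> ->; exists (fun _ => 0); split=> [[]//|]; rewrite big_ord0.
  by case=> f [_ ->]; rewrite big_ord0 eqxx.
rewrite /lin_sumset (big_ord_recl (op:=sumset)) /=; split.
  case/allpairsP=> [[u v] /= [/mapP [w hw ->] /IH [f' [hf' ->]] ->]].
  exists (fun t : 'I_k.+1 => oapp f' w (unlift ord0 t)); split.
    by move=> t; case: unliftP => /= [j ->|-> //]; exact: hf'.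
  rewrite big_ord_recl /= unlift_none /=; congr (_ + _).
  by apply: eq_bigr => j _ /=; rewrite liftK.
case=> f [hf ->]; rewrite big_ord_recl /=; apply/allpairsP.
exists (lam ord0 * f ord0, \sum_(t < k) lam (lift ord0 t) * f (lift ord0 t)).
split=> /=; [exact: map_f | | by []].
by apply/IH; exists (fun t => f (lift ord0 t)).
Qed.

Lemma card_set_map_inj {f : int -> int} (s : seq int) :
  injective f -> card_set (map f s) = card_set s.
Proof. by move=> f_inj; rewrite /card_set undup_map_inj // size_map. Qed.

Lemma card_set_disjoint (S T N : seq int) :
  {subset T <= S} -> {subset N <= S} -> (forall x, x \in N -> x \notin T) ->
  (card_set T + card_set N <= card_set S)%N.
Proof.
move=> TS NS NT; rewrite /card_set -size_cat; apply: uniq_leq_size.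
  rewrite cat_uniq !undup_uniq /= andbT; apply/hasPn => x.
  by rewrite !mem_undup; exact: NT.
by move=> x; rewrite mem_cat !mem_undup => /orP [/TS|/NS].
Qed.

Lemma bigmin_leq (I : eqType) (s : seq I) (F : I -> nat) d x :
  x \in s -> (\big[minn/d]_(y <- s) F y <= F x)%N.
Proof.
elim: s => [//|a s IH]; rewrite inE big_cons => /orP [/eqP <-|hx].
  exact: geq_minl.
exact: leq_trans (geq_minr _ _) (IH hx).
Qed.

Lemma min_class_size_le {A : seq int} (g : int) {a : int} :
  a \in A -> (min_class_size A g <= card_set (res_class A g (a %% g)%Z))%N.
Proof. by move=> ha; apply: bigmin_leq; rewrite mem_undup; apply: map_f. Qed.

Lemma res_class_dvd {A : seq int} {g r x : int} :
  x \in res_class A g r -> (g %| x - r)%Z.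
Proof.
rewrite mem_filter => /andP[/eqP <- _].
by rewrite {1}(divz_eq x g) addrK dvdz_mull.
Qed.

Lemma big_gcdz_dvd {I : eqType} {s : seq I} {P : pred I} (F : I -> int) {x : I} :
  x \in s -> P x -> (\big[gcdz/0]_(y <- s | P y) F y %| F x)%Z.
Proof.
elim: s => [//|a s IH]; rewrite inE big_cons => /orP [/eqP <-|hx] Px.
  by rewrite Px dvdz_gcdl.
case: (P a); last exact: IH.
exact: dvdz_trans (dvdz_gcdr _ _) (IH hx Px).
Qed.

Lemma dvdz_big_gcdz (I : eqType) (s : seq I) (P : pred I) (F : I -> int) d :
  (forall x, x \in s -> P x -> (d %| F x)%Z) ->
  (d %| \big[gcdz/0]_(y <- s | P y) F y)%Z.
Proof.
move=> dF; rewrite big_seq_cond.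
apply: (big_ind (fun z => (d %| z)%Z)); [exact: dvdz0 | | ].
  by move=> a b da db; rewrite dvdz_gcd da db.
by move=> x /andP[]; exact: dF.
Qed.

Lemma big_gcdz_divK {I : eqType} {s : seq I} {P : pred I} {F : I -> int} :
  \big[gcdz/0]_(y <- s | P y) F y != 0 ->
  \big[gcdz/0]_(y <- s | P y) (F y %/ \big[gcdz/0]_(z <- s | P z) F z)%Z = 1.
Proof.
have gcd_ge0 (H : I -> int) : 0 <= \big[gcdz/0]_(y <- s | P y) H y.
  by elim: s => [|a s' IH]; rewrite ?big_nil ?big_cons //; case: (P a).
set G := \big[gcdz/0]_(z <- s | P z) F z => G0.
set E := \big[gcdz/0]_(y <- s | P y) _.
have E_ge0 : 0 <= E := gcd_ge0 _.
suff : (E %| 1)%Z by rewrite dvdz1 => /eqP E1; lia.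
rewrite -(dvdz_mul2r G0) mul1r; apply: dvdz_big_gcdz => x xs Px.
rewrite -[F x](divzK (big_gcdz_dvd F xs Px)) dvdz_mul2r //.
exact: big_gcdz_dvd.
Qed.

Record int_ideal (P : int -> Prop) : Prop := IntIdeal {
  ideal0 : P 0;
  idealD : forall a b, P a -> P b -> P (a + b);
  idealMr : forall a m, P a -> P (a * m) }.
Arguments idealMr {P}.

Lemma ideal_gcdz {P : int -> Prop} {a b : int} :
  int_ideal P -> P a -> P b -> P (gcdz a b).
Proof.
case=> _ PD PM Pa Pb; have [u [v <-]] := Bezoutz a b.
by rewrite mulrC [v * b]mulrC; apply: PD; apply: PM.
Qed.

Lemma ideal_big_gcdz {P : int -> Prop} {I : eqType} {s : seq I} {Q : pred I}
    {F : I -> int} :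
  int_ideal P -> (forall x, x \in s -> Q x -> P (F x)) ->
  P (\big[gcdz/0]_(y <- s | Q y) F y).
Proof.
move=> idP PF; rewrite big_seq_cond.
apply: (big_ind P); [exact: ideal0 | by move=> a b; exact: ideal_gcdz | ].
by move=> x /andP[]; exact: PF.
Qed.

Lemma ideal_scale {P : int -> Prop} (c : int) :
  int_ideal P -> int_ideal (fun x => P (c * x)).
Proof.
case=> P0 PD PM; split; first by rewrite mulr0.
  by move=> a b Pa Pb; rewrite mulrDr; apply: PD.
by move=> a m Pa; rewrite mulrA; apply: PM.
Qed.

Lemma dvd_gcd_but {k : nat} (lam : 'I_k -> int) {i t : 'I_k} :
  t != i -> (gcd_but lam i %| lam t)%Z.
Proof. by move=> ti; apply: big_gcdz_dvd; rewrite ?mem_index_enum. Qed.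

Lemma gcd_but_neq0 {k : nat} {lam : 'I_k -> int} (i : 'I_k) :
  (2 <= k)%N -> (forall t, lam t != 0) -> gcd_but lam i != 0.
Proof.
move=> k2 lam0; have [t ti] : exists t : 'I_k, t != i.
  have t_lt : ((i == 0%N :> nat) < k)%N by case: eqP; lia.
  by exists (Ordinal t_lt); apply/eqP => /(congr1 val) /=; case: eqP; lia.
apply: contraNneq (lam0 t) => g0.
by have := dvd_gcd_but lam ti; rewrite g0 dvd0z.
Qed.

Lemma coprime_gcd_but {k : nat} (lam : 'I_k -> int) (i : 'I_k) :
  gcd_all lam = 1 -> coprimez (lam i) (gcd_but lam i).
Proof.
move=> gcd1; suff : (gcdz (lam i) (gcd_but lam i) %| gcd_all lam)%Z.
  by rewrite gcd1 dvdz1 /coprimez /gcdz absz_nat => /eqP ->.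
apply: dvdz_big_gcdz => t _ _; case: (eqVneq t i) => [->|ti].
  exact: dvdz_gcdl.
exact: dvdz_trans (dvdz_gcdr _ _) (dvd_gcd_but lam ti).
Qed.

(* For A reduced and d <> 0, the integers d and a - r (a in A) are coprime:
   a common divisor D >= 2 would put A inside r + D.Z. *)
Lemma reduced_gcd_shift {A : seq int} {d : int} (r : int) :
  reduced A -> d != 0 -> gcdz d (\big[gcdz/0]_(a <- A) (a - r)) = 1.
Proof.
move=> redA d0; set D := gcdz d _.
have D_ge0 : 0 <= D by [].
have D0 : D != 0 by rewrite gcdz_eq0 negb_and d0.
suff : ~ (2 <= D) by lia.
move=> D2; apply: redA; exists r, D; split=> // x xA.
exact: dvdz_trans (dvdz_gcdr _ _) (big_gcdz_dvd (fun a => a - r) xA isT).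
Qed.

Section Stabilizer.

Context {g : int} {Q : int -> Prop}.
Hypothesis g_neq0 : g != 0.
Hypothesis Q_periodic : forall v m, Q v -> Q (v + g * m).

Definition stab (s : int) : Prop := forall v, Q v -> Q (v + s).

Lemma stab_add s s' : stab s -> stab s' -> stab (s + s').
Proof. by move=> hs hs' v /hs /hs'; rewrite addrA. Qed.

Lemma stab_muln s (n : nat) : stab s -> stab (s * n%:Z).
Proof.
move=> hs; elim: n => [|n IHn]; first by move=> v; rewrite mulr0 addr0.
by rewrite -addn1 PoszD mulrDr mulr1; apply: stab_add.
Qed.

(* The stabilizer is an ideal of Z: since g.Z stabilizes Q, multiplying by
   m amounts to multiplying by the natural number m mod g. *)
Lemma stab_ideal : int_ideal stab.
Proof.
split; [by move=> v; rewrite addr0 | exact: stab_add | move=> s m hs].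
have := modz_ge0 m g_neq0; case m_mod: (m %% g)%Z => [n|//] _.
have -> : s * m = s * n%:Z + g * (s * (m %/ g)%Z).
  by rewrite {1}(divz_eq m g) m_mod; ring.
by apply: stab_add; [exact: stab_muln | move=> v /Q_periodic].
Qed.

Lemma stab1_full {v0 : int} : stab 1 -> Q v0 -> forall v, Q v.
Proof.
move=> s1 Qv0 v; have := idealMr stab_ideal 1 (v - v0) s1.
by rewrite mul1r => /(_ v0 Qv0); rewrite addrC subrK.
Qed.

End Stabilizer.
Arguments stab : clear implicits.

Section TwoCases.

Context {k : nat} {lam : 'I_k -> int} {A : seq int} {i : 'I_k} {r : int}.
Local Notation g := (gcd_but lam i).
Local Notation B := (res_class A g r).
Local Notation mu t := (lam t %/ g)%Z.
Local Notation shrink x := ((x - r) %/ g)%Z.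

(* v lies, mod g, in lam_i . A'_{ij}, where A'_{ij} = (B - r) / g. *)
Definition scaled_class (v : int) : Prop :=
  exists2 y, y \in res_class' A g r & (g %| v - lam i * y)%Z.

Lemma scaled_class_periodic v m : scaled_class v -> scaled_class (v + g * m).
Proof.
case=> y yB' hy; exists y => //.
by rewrite addrAC rpredD // dvdz_mulr.
Qed.

Lemma lin_comb_mod (f : 'I_k -> int) (t1 : 'I_k) :
  t1 != i -> (forall t, t != t1 -> (g %| f t - r)%Z) ->
  (g * g %| \sum_(t < k) lam t * f t - (\sum_(t < k) lam t) * r
            - g * (lam i * shrink (f i) + mu t1 * (f t1 - r)))%Z.
Proof.
move=> t1i fr; have it1 : i != t1 by rewrite eq_sym.
have muK t : t != i -> lam t = mu t * g by move=> ti; rewrite divzK ?dvd_gcd_but.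
have rest_dvd :
    (g * g %| \sum_(t < k | (t != i) && (t != t1)) lam t * (f t - r))%Z.
  apply: rpred_sum => t /andP[ti tt1]; rewrite muK // -(divzK (fr t tt1)).
  by apply/dvdzP; exists (mu t * shrink (f t)); ring.
have -> : \sum_(t < k) lam t * f t - (\sum_(t < k) lam t) * r
          = \sum_(t < k) lam t * (f t - r).
  by rewrite mulr_suml -sumrB; apply: eq_bigr => t _; rewrite mulrBr.
rewrite (bigD1 i) //= (bigD1 t1) //=; move: rest_dvd.
set rest := \sum_(t < k | _) _; move: (divzK (fr i it1)) (muK t1 t1i).
set u := shrink (f i); set m := mu t1 => fiE lamt1E; rewrite -fiE lamt1E.
suff -> : lam i * (u * g) + (m * g * (f t1 - r) + rest)
          - g * (lam i * u + m * (f t1 - r)) = rest by [].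
ring.
Qed.

(* Moving the coordinate t1 of sum_t lam_t b (b in B) to an x = a (mod g)
   leaves T = lam.B when the shift mu_{t1} (a - r) moves the point
   lam_i (b - r)/g of Q outside Q: by [lin_comb_mod], an equality
   with an element of T would put this point back in Q. *)
Lemma witness_outside (t1 : 'I_k) (b a x : int) :
  g != 0 -> t1 != i -> b \in B ->
  ~ scaled_class (lam i * shrink b + mu t1 * (a - r)) -> (g %| x - a)%Z ->
  \sum_(t < k) lam t * (if t == t1 then x else b)
    \notin lin_sumset lam (fun _ => B).
Proof.
move=> g0 t1i bB nQ xa; apply/negP => /mem_lin_sumset [f [fB zE]]; apply: nQ.
exists (shrink (f i)); first exact: map_f.
have it1 : i != t1 by rewrite eq_sym.
have hf := lin_comb_mod f t1 t1i (fun t _ => res_class_dvd (fB t)).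
have moved_dvd t : t != t1 -> (g %| (if t == t1 then x else b) - r)%Z.
  by move/negbTE ->; exact: res_class_dvd bB.
have hz := lin_comb_mod (fun t => if t == t1 then x else b) t1 t1i moved_dvd.
move: hz hf; rewrite /= eqxx (negbTE it1) zE.
set X := \sum_(t < k) _; set L := _ * r => hz hf.
set cf := lam i * shrink (f i) + mu t1 * (f t1 - r).
set cz := lam i * shrink b + mu t1 * (x - r).
have : (g * g %| g * (cz - cf))%Z.
  have -> : g * (cz - cf) = (X - L - g * cf) - (X - L - g * cz) by ring.
  exact: rpredB.
rewrite dvdz_mul2l // => g_czf.
have -> : lam i * shrink b + mu t1 * (a - r) - lam i * shrink (f i)
          = (cz - cf) - mu t1 * (x - a) + mu t1 * (f t1 - r).
  by rewrite /cf /cz; ring.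
by rewrite rpredD ?(rpredB g_czf) ?dvdz_mull // (res_class_dvd (fB t1)).
Qed.

(* First case: a shift leaving Q yields |S| >= |T| + |A_w| >= |T| + min_w |A_w|,
   the |A_w| new elements being the moved sums of [witness_outside]. *)
Lemma witness_growth (t1 : 'I_k) (b a : int) :
  (forall t, lam t != 0) -> g != 0 -> t1 != i -> b \in B -> a \in A ->
  ~ scaled_class (lam i * shrink b + mu t1 * (a - r)) ->
  (card_set (lin_sumset lam (fun _ => B)) + min_class_size A g
   <= card_set (lin_sumset lam (fun t => if t == i then B else A)))%N.
Proof.
move=> lam0 g0 t1i bB aA nQ; have it1 : i != t1 by rewrite eq_sym.
have BA : {subset B <= A} by move=> x; rewrite mem_filter => /andP[].
pose z x := \sum_(t < k) lam t * (if t == t1 then x else b).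
have zE x : z x = lam t1 * x + \sum_(t < k | t != t1) lam t * b.
  rewrite /z (bigD1 t1) //= eqxx; congr (_ + _).
  by apply: eq_bigr => t /negbTE ->.
have z_inj : injective z.
  by move=> x y; rewrite !zE => /addIr /(mulfI (lam0 t1)).
set Aw := res_class A g (a %% g)%Z.
apply: leq_trans (leq_add (leqnn _) (min_class_size_le g aA)) _.
rewrite -(card_set_map_inj Aw z_inj); apply: card_set_disjoint.
- move=> x /mem_lin_sumset [f [fB ->]]; apply/mem_lin_sumset.
  by exists f; split=> // t; case: ifP => // _; apply: BA.
- move=> _ /mapP [x xAw ->]; apply/mem_lin_sumset.
  exists (fun t => if t == t1 then x else b); split=> // t.
  case: (eqVneq t i) => [->|_]; first by rewrite (negbTE it1).
  by case: ifP => _; [move: xAw; rewrite mem_filter => /andP[] | apply: BA].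
- move=> _ /mapP [x xAw ->]; apply: (witness_outside t1 b a) => //.
  by move: xAw; rewrite mem_filter -eqz_mod_dvd => /andP[].
Qed.

(* Second case: every shift mu_t (a - r) with t <> i, a in A keeps the
   points lam_i (b - r)/g of Q inside Q, hence stabilizes Q.  The
   stabilizer then contains mu_t gcd(g, a - r : a in A) = mu_t (A is
   reduced), hence gcd(mu_t : t <> i) = 1; so Q = Z, and lam_i being prime
   to g, A'_{ij} meets every residue class mod g. *)
Lemma stable_fully_distributed :
  gcd_all lam = 1 -> reduced A -> g != 0 -> has (fun a => (a %% g)%Z == r) A ->
  (forall t a b, t != i -> a \in A -> b \in B ->
     scaled_class (lam i * shrink b + mu t * (a - r))) ->
  fully_distributed (res_class' A g r) g.
Proof.
move=> gcd1 redA g0 has_r stable.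
have idQ := stab_ideal g0 scaled_class_periodic.
have stab_shift t a : t != i -> a \in A -> stab scaled_class (mu t * (a - r)).
  move=> ti aA v [_ /mapP [b bB ->] vb]; have [y yB' hy] := stable t a b ti aA bB.
  exists y => //.
  have -> : v + mu t * (a - r) - lam i * y =
            (v - lam i * shrink b) + (lam i * shrink b + mu t * (a - r) - lam i * y).
    by ring.
  exact: rpredD.
have stab_mu t : t != i -> stab scaled_class (mu t).
  move=> ti; rewrite -[mu t]mulr1 -(reduced_gcd_shift r redA g0).
  apply: ideal_gcdz (ideal_scale _ idQ) _ _.
    by move=> v; rewrite mulrC; exact: scaled_class_periodic.
  by apply: ideal_big_gcdz (ideal_scale _ idQ) _ => a aA _; exact: stab_shift.
have stab1 : stab scaled_class 1.
  rewrite -(big_gcdz_divK g0); apply: ideal_big_gcdz idQ _ => t _.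
  exact: stab_mu.
have [b0 b0A /eqP b0r] := hasP has_r.
have Qb0 : scaled_class (lam i * shrink b0).
  by exists (shrink b0); [apply: map_f; rewrite mem_filter b0r eqxx | rewrite subrr].
move=> rho; have [y yB' hy] := stab1_full g0 scaled_class_periodic stab1 Qb0 (lam i * rho).
exists y => //; rewrite eqz_mod_dvd -rpredN opprB.
have g_lam : coprimez g (lam i) by rewrite /coprimez gcdzC; exact: coprime_gcd_but.
by rewrite -mulrBr Gauss_dvdzr in hy.
Qed.

Lemma shift_dichotomy :
  (exists t1 b a, [/\ t1 != i, b \in B, a \in A &
     ~ scaled_class (lam i * shrink b + mu t1 * (a - r))]) \/
  (forall t a b, t != i -> a \in A -> b \in B ->
     scaled_class (lam i * shrink b + mu t * (a - r))).
Proof.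
have [witness | no_witness] := classic (exists t1 b a, [/\ t1 != i, b \in B,
  a \in A & ~ scaled_class (lam i * shrink b + mu t1 * (a - r))]).
  by left.
right=> t a b ti aA bB; apply: NNPP => nQ.
by apply: no_witness; exists t, b, a.
Qed.

End TwoCases.

Theorem mainTheorem3 (k : nat) (lam : 'I_k -> int) (A : seq int)
  (i : 'I_k) (r : int) :
  (2 <= k)%N ->
  (forall t, lam t != 0) ->
  gcd_all lam = 1 ->
  reduced A ->
  (* r = a_{ij}: the residue (in [0, g_i)) of a nonempty class of A mod g_i *)
  0 <= r < gcd_but lam i ->
  has (fun a => (a %% gcd_but lam i)%Z == r) A ->
  fully_distributed (res_class' A (gcd_but lam i) r) (gcd_but lam i)
  \/
  (card_set (lin_sumset lam (fun t => if t == i then res_class A (gcd_but lam i) r else A))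
   >= card_set (lin_sumset lam (fun _ => res_class A (gcd_but lam i) r))
      + min_class_size A (gcd_but lam i))%N.
Proof.
move=> k2 lam0 gcd1 redA _ has_r; have g0 := gcd_but_neq0 i k2 lam0.
have [[t1 [b [a [t1i bB aA nQ]]]] | stable] :=
  shift_dichotomy (lam := lam) (A := A) (i := i) (r := r).
- by right; exact: witness_growth lam0 g0 t1i bB aA nQ.
- by left; exact: stable_fully_distributed gcd1 redA g0 has_r stable.
Qed.
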